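(* Let $\xi(t)=(\xi_1(t),\dots,\xi_d(t))$, $t\geq 0$, be a continuous path in $\mathbb{R}^d$ such that the integrals $\int_0^t\xi(s)ds$ and $\int_0^t|\xi(s)|ds$ exist for all $t\geq0$. For $\nu\geq1$ and $1\leq i_1,\dots,i_\nu\leq d$ define \[ \Sigma^{i_1,\dots,i_\nu}(t)=\int_{0\leq s_1\leq\dots\leq s_\nu\leq t}\xi_{i_1}(s_1)\cdots\xi_{i_\nu}(s_\nu)\,ds_1\cdots ds_\nu . \] Suppose that \[ \limsup_{t\to\infty} t^{-1}\int_{0}^t|\xi(s)|ds=R<\infty \] and that the limit \[ \lim_{t\to\infty}t^{-1}\int_{0}^t\xi(s)ds=Q=(Q_1,\dots,Q_d) \] exists with $|Q|<\infty$. Then for any $\nu\geq 1$ and $1\leq i_1,\dots,i_\nu\leq d$, \[ \lim_{t\to\infty}t^{-\nu}\Sigma^{i_1,\dots,i_\nu}(t)=\frac 1{\nu !}\prod_{j=1}^\nu Q_{i_j}. \]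
   Context: $|\cdot|$ denotes the Euclidean norm on $\mathbb{R}^d$. *)

From Stdlib Require Import Reals List.
From Coquelicot Require Import Coquelicot.
Open Scope R_scope.

(* A path in R^d is represented by its coordinates xi i : R -> R, i < d
   (coordinates are indexed 0..d-1 instead of 1..d). *)

Definition path_norm (d : nat) (xi : nat -> R -> R) (s : R) : R :=
  sqrt (fold_right (fun i acc => (xi i s) ^ 2 + acc) 0 (List.seq 0 d)).

Definition cont_path (d : nat) (xi : nat -> R -> R) : Prop :=
  forall i, (i < d)%nat -> forall t, 0 <= t ->
    filterlim (xi i) (within (fun s => 0 <= s) (locally t)) (locally (xi i t)).

(* Iterated integral indexed by the REVERSED word:
   sigma_rev [i_nu; ...; i_1] t
     = int_0^t sigma_rev [i_{nu-1};...;i_1] (s) xi_{i_nu}(s) ds,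
   which is the integral over the simplex 0 <= s_1 <= ... <= s_nu <= t of
   xi_{i_1}(s_1) ... xi_{i_nu}(s_nu). *)
Fixpoint sigma_rev (xi : nat -> R -> R) (w : list nat) (t : R) : R :=
  match w with
  | nil => 1
  | i :: w' => RInt (fun s => sigma_rev xi w' s * xi i s) 0 t
  end.

Definition Sigma (xi : nat -> R -> R) (w : list nat) (t : R) : R :=
  sigma_rev xi (rev w) t.

From Stdlib Require Import Reals List Lra Lia.
From Coquelicot Require Import Coquelicot.
Open Scope R_scope.

(** If [Sigma_v(t) = c t^n + o(t^n)] with
    [c = Q_v / n!], the next iterated integral splits as
    [c * int_0^t s^n xi_i(s) ds + int_0^t o(s^n) xi_i(s) ds].  Integrating by parts against
    [int_0^s xi_i = Q_i s + o(s)] gives [Q_i t^(n+1) / (n+1) + o(t^(n+1))] for the first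
    term; the second is [o(t^(n+1))] because the mean of [|xi_i|] over [0, t] stays
    bounded. *)

Definition continuous_everywhere (f : R -> R) : Prop := forall x, continuous f x.

Section ContinuousEverywhere.

Implicit Types (f g : R -> R).

Lemma continuous_everywhere_ex_RInt f a b : continuous_everywhere f -> ex_RInt f a b.
Proof. intros Cf; apply (ex_RInt_continuous (V := R_CompleteNormedModule)); intros; apply Cf. Qed.

Lemma continuous_everywhere_const c : continuous_everywhere (fun _ => c).
Proof. intros x; apply continuous_const. Qed.

Lemma continuous_everywhere_id : continuous_everywhere (fun s => s).
Proof. intros x; apply continuous_id. Qed.

Lemma continuous_everywhere_plus f g :
  continuous_everywhere f -> continuous_everywhere g ->
  continuous_everywhere (fun s => f s + g s).
Proof. intros Cf Cg x; exact (continuous_plus f g x (Cf x) (Cg x)). Qed.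

Lemma continuous_everywhere_minus f g :
  continuous_everywhere f -> continuous_everywhere g ->
  continuous_everywhere (fun s => f s - g s).
Proof. intros Cf Cg x; exact (continuous_minus f g x (Cf x) (Cg x)). Qed.

Lemma continuous_everywhere_mult f g :
  continuous_everywhere f -> continuous_everywhere g ->
  continuous_everywhere (fun s => f s * g s).
Proof. intros Cf Cg x; exact (continuous_mult f g x (Cf x) (Cg x)). Qed.

Lemma continuous_everywhere_abs f :
  continuous_everywhere f -> continuous_everywhere (fun s => Rabs (f s)).
Proof. intros Cf x; exact (continuous_Rabs_comp f x (Cf x)). Qed.

Lemma continuous_everywhere_pow f n :
  continuous_everywhere f -> continuous_everywhere (fun s => f s ^ n).
Proof.
  intros Cf; induction n as [|n IH]; simpl.
  - exact (continuous_everywhere_const 1).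
  - exact (continuous_everywhere_mult _ _ Cf IH).
Qed.

Lemma is_derive_RInt_0 f x :
  continuous_everywhere f -> is_derive (fun t => RInt f 0 t) x (f x).
Proof.
  intros Cf; apply (is_derive_RInt (V := R_CompleteNormedModule) f _ 0); [|apply Cf].
  apply filter_forall; intros t; apply RInt_correct, continuous_everywhere_ex_RInt, Cf.
Qed.

Lemma continuous_everywhere_RInt f :
  continuous_everywhere f -> continuous_everywhere (fun t => RInt f 0 t).
Proof.
  intros Cf x; apply (ex_derive_continuous (K := R_AbsRing) (V := R_NormedModule)).
  eexists; apply is_derive_RInt_0, Cf.
Qed.

End ContinuousEverywhere.

Ltac solve_continuous_everywhere :=
  repeat match goal with
  | H : continuous_everywhere ?f |- continuous_everywhere ?f => exact H
  | |- continuous_everywhere (fun _ => ?c) => apply continuous_everywhere_const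
  | |- continuous_everywhere (fun s => s) => apply continuous_everywhere_id
  | |- continuous_everywhere (fun s => @?f s + @?g s) => apply (continuous_everywhere_plus f g)
  | |- continuous_everywhere (fun s => @?f s - @?g s) => apply (continuous_everywhere_minus f g)
  | |- continuous_everywhere (fun s => @?f s * @?g s) => apply (continuous_everywhere_mult f g)
  | |- continuous_everywhere (fun s => Rabs (@?f s)) => apply (continuous_everywhere_abs f)
  | |- continuous_everywhere (fun s => @?f s ^ ?n) => apply (continuous_everywhere_pow f n)
  | |- continuous_everywhere (fun s => RInt ?f 0 s) => apply (continuous_everywhere_RInt f)
  | |- continuous_everywhere (fun s => ?f s) => change (continuous_everywhere f)
  end.

Ltac solve_ex_RInt :=
  apply continuous_everywhere_ex_RInt; solve_continuous_everywhere.

(* Coquelicot's lemmas state these equations in the carrier of a normed module, where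
   [ring] and [field] do not apply; the versions below are stated in [R]. *)
Lemma RInt_ext_R (f g : R -> R) a b :
  (forall x, Rmin a b < x < Rmax a b -> f x = g x) -> RInt f a b = RInt g a b.
Proof. exact (RInt_ext f g a b). Qed.

Lemma RInt_scal_R (f : R -> R) c a b :
  ex_RInt f a b -> RInt (fun s => c * f s) a b = c * RInt f a b.
Proof. exact (RInt_scal f a b c). Qed.

Lemma RInt_plus_R (f g : R -> R) a b : ex_RInt f a b -> ex_RInt g a b ->
  RInt (fun s => f s + g s) a b = RInt f a b + RInt g a b.
Proof. exact (RInt_plus f g a b). Qed.

Lemma RInt_Chasles_R (f : R -> R) a b c : ex_RInt f a b -> ex_RInt f b c ->
  RInt f a b + RInt f b c = RInt f a c.
Proof. exact (RInt_Chasles f a b c). Qed.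

Lemma RInt_pow_0 k t : RInt (fun s => s ^ k) 0 t = t ^ S k / INR (S k).
Proof.
  rewrite (is_RInt_unique _ _ _ _ (is_RInt_pow 0 t k)).
  change (t ^ S k / INR (S k) - 0 ^ S k / INR (S k) = t ^ S k / INR (S k)).
  rewrite pow_i by lia.
  unfold Rdiv; ring.
Qed.

Lemma is_lim_ext_pos (f g : R -> R) (l : Rbar) :
  (forall t, 0 < t -> f t = g t) -> is_lim f p_infty l -> is_lim g p_infty l.
Proof. intros Efg; apply is_lim_ext_loc; exists 0; exact Efg. Qed.

Definition is_o_pow (e : R -> R) (k : nat) : Prop :=
  forall eps, 0 < eps -> exists M, forall s, M <= s -> Rabs (e s) <= eps * s ^ k.

Definition bounded_abs_mean (h : R -> R) : Prop :=
  exists B T, forall t, T <= t -> RInt (fun s => Rabs (h s)) 0 t <= B * t.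

Lemma bounded_abs_mean_const c : bounded_abs_mean (fun _ => c).
Proof.
  exists (Rabs c), 0; intros t _.
  rewrite RInt_const; unfold scal; simpl; unfold mult; simpl; lra.
Qed.

Lemma is_o_pow_of_is_lim (g : R -> R) k (L : R) :
  is_lim (fun t => g t / t ^ k) p_infty L -> is_o_pow (fun s => g s - L * s ^ k) k.
Proof.
  intros Hg eps Heps.
  apply is_lim_spec in Hg; destruct (Hg (mkposreal eps Heps)) as [M HM].
  exists (Rmax M 0 + 1); intros s Hs.
  pose proof (Rmax_l M 0); pose proof (Rmax_r M 0).
  assert (Hpow : 0 < s ^ k) by (apply pow_lt; lra).
  replace (g s - L * s ^ k) with ((g s / s ^ k - L) * s ^ k) by (field; lra).
  rewrite Rabs_mult, (Rabs_pos_eq (s ^ k)) by lra.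
  apply Rmult_le_compat_r; [lra|].
  apply Rlt_le, HM; lra.
Qed.

Lemma abs_RInt_mult_tail_le (e h : R -> R) k c M t :
  continuous_everywhere e -> continuous_everywhere h -> 0 <= c -> 0 <= M <= t ->
  (forall s, M <= s -> Rabs (e s) <= c * s ^ k) ->
  Rabs (RInt (fun s => e s * h s) M t) <= c * t ^ k * RInt (fun s => Rabs (h s)) 0 t.
Proof.
  intros Ce Ch Hc HMt He.
  assert (Hhead : 0 <= RInt (fun s => Rabs (h s)) 0 M).
  { apply RInt_ge_0; [lra | solve_ex_RInt | intros; apply Rabs_pos]. }
  assert (Hct : 0 <= c * t ^ k) by (apply Rmult_le_pos; [lra | apply pow_le; lra]).
  rewrite <- (RInt_Chasles_R _ 0 M t) by solve_ex_RInt.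
  eapply Rle_trans; [apply abs_RInt_le; [lra | solve_ex_RInt]|].
  eapply Rle_trans.
  - apply (RInt_le _ (fun s => c * t ^ k * Rabs (h s))); [lra | solve_ex_RInt | solve_ex_RInt |].
    intros s Hs; rewrite Rabs_mult.
    apply Rmult_le_compat_r; [apply Rabs_pos|].
    eapply Rle_trans; [apply He; lra|].
    apply Rmult_le_compat_l; [lra | apply pow_incr; lra].
  - rewrite RInt_scal_R by solve_ex_RInt.
    apply Rmult_le_compat_l; lra.
Qed.

Lemma is_lim_div_pow_of_is_o_pow (F : R -> R) k :
  is_o_pow F k -> is_lim (fun t => F t / t ^ k) p_infty 0.
Proof.
  intros HF; apply is_lim_spec; intros [eps Heps]; cbn [pos].
  destruct (HF (eps / 2)) as [M HM]; [lra|].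
  exists (Rmax M 0); intros t Ht.
  pose proof (Rmax_l M 0); pose proof (Rmax_r M 0).
  assert (Hpow : 0 < t ^ k) by (apply pow_lt; lra).
  rewrite Rminus_0_r, Rabs_div, (Rabs_pos_eq (t ^ k)) by lra.
  apply Rlt_div_l; [lra|].
  assert (HFt := HM t ltac:(lra)); nra.
Qed.

Lemma is_o_pow_RInt_mult (e h : R -> R) k :
  continuous_everywhere e -> continuous_everywhere h ->
  is_o_pow e k -> bounded_abs_mean h ->
  is_o_pow (fun t => RInt (fun s => e s * h s) 0 t) (S k).
Proof.
  intros Ce Ch He [B [T HB]] eps Heps.
  set (B' := Rabs B + 1).
  assert (HB' : 0 < B') by (unfold B'; pose proof (Rabs_pos B); lra).
  destruct (He (eps / (2 * B'))) as [M0 HM0]; [apply Rdiv_lt_0_compat; lra|].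
  set (M := Rmax (Rmax M0 T) 1).
  assert (HM : M0 <= M /\ T <= M /\ 1 <= M).
  { unfold M; pose proof (Rmax_l M0 T); pose proof (Rmax_r M0 T).
    pose proof (Rmax_l (Rmax M0 T) 1); pose proof (Rmax_r (Rmax M0 T) 1); lra. }
  set (K := Rabs (RInt (fun s => e s * h s) 0 M)).
  exists (Rmax M (2 * K / eps)); intros t Ht.
  pose proof (Rmax_l M (2 * K / eps)); pose proof (Rmax_r M (2 * K / eps)).
  assert (Hhead : K <= eps / 2 * t ^ S k).
  { assert (Ht_pow : t <= t ^ S k) by (rewrite <- (pow_1 t) at 1; apply Rle_pow; [lra | lia]).
    apply Rle_trans with (eps / 2 * t); [|apply Rmult_le_compat_l; lra].
    apply (Rmult_le_reg_l (2 / eps)); [apply Rdiv_lt_0_compat; lra|].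
    replace (2 / eps * (eps / 2 * t)) with t by (field; lra).
    replace (2 / eps * K) with (2 * K / eps) by (field; lra); lra. }
  assert (Htail : Rabs (RInt (fun s => e s * h s) M t) <= eps / 2 * t ^ S k).
  { eapply Rle_trans.
    - apply (abs_RInt_mult_tail_le e h k (eps / (2 * B')) M t Ce Ch); [| lra |].
      + apply Rlt_le, Rdiv_lt_0_compat; lra.
      + intros s Hs; apply HM0; lra.
    - assert (HBt : RInt (fun s => Rabs (h s)) 0 t <= B' * t).
      { pose proof (HB t ltac:(lra)); pose proof (Rle_abs B); unfold B'; nra. }
      replace (eps / 2 * t ^ S k) with (eps / (2 * B') * t ^ k * (B' * t)) by (simpl; field; lra).
      apply Rmult_le_compat_l; [|exact HBt].
      apply Rmult_le_pos; [apply Rlt_le, Rdiv_lt_0_compat; lra | apply pow_le; lra]. }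
  rewrite <- (RInt_Chasles_R _ 0 M t) by solve_ex_RInt.
  pose proof (Rabs_triang (RInt (fun s => e s * h s) 0 M) (RInt (fun s => e s * h s) M t))
    as Htriangle.
  fold K in Htriangle; lra.
Qed.

Lemma is_lim_RInt_div_pow (g : R -> R) k (L : R) :
  continuous_everywhere g -> is_lim (fun t => g t / t ^ k) p_infty L ->
  is_lim (fun t => RInt g 0 t / t ^ S k) p_infty (L / INR (S k)).
Proof.
  intros Cg Hg.
  assert (Herr := is_lim_div_pow_of_is_o_pow _ _
    (is_o_pow_RInt_mult (fun s => g s - L * s ^ k) (fun _ => 1) k
       ltac:(solve_continuous_everywhere) (continuous_everywhere_const 1)
       (is_o_pow_of_is_lim g k L Hg) (bounded_abs_mean_const 1))).
  replace (L / INR (S k)) with (0 + L / INR (S k)) by ring.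
  eapply is_lim_ext_pos; [|exact (is_lim_plus' _ _ _ _ _ Herr (is_lim_const _ _))].
  intros t Ht; cbv beta.
  rewrite (RInt_ext_R (fun s => (g s - L * s ^ k) * 1) (fun s => g s + (- L) * s ^ k))
    by (intros; ring).
  rewrite RInt_plus_R, RInt_scal_R, RInt_pow_0 by solve_ex_RInt.
  assert (t ^ S k <> 0) by (apply pow_nonzero; lra).
  field; split; [assumption | exact (not_0_INR _ (Nat.neq_succ_0 k))].
Qed.

Lemma RInt_pow_succ_mult (f : R -> R) m t :
  continuous_everywhere f ->
  RInt (fun s => s ^ S m * f s) 0 t =
  t ^ S m * RInt f 0 t - INR (S m) * RInt (fun s => s ^ m * RInt f 0 s) 0 t.
Proof.
  intros Cf.
  set (F := fun s => RInt f 0 s).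
  assert (CF : continuous_everywhere F) by (apply continuous_everywhere_RInt, Cf).
  assert (Cdpow : continuous_everywhere (fun s => INR (S m) * s ^ m))
    by solve_continuous_everywhere.
  assert (Hparts := is_RInt_scal_derive_r (V := R_CompleteNormedModule)
    (fun s => s ^ S m) F (fun s => INR (S m) * s ^ m) f 0 t
    (RInt (fun s => INR (S m) * s ^ m * F s) 0 t)).
  apply is_RInt_unique in Hparts.
  - change (RInt (fun s => s ^ S m * f s) 0 t =
      t ^ S m * F t - 0 ^ S m * F 0 - RInt (fun s => INR (S m) * s ^ m * F s) 0 t) in Hparts.
    rewrite Hparts, pow_i by lia.
    rewrite (RInt_ext_R (fun s => INR (S m) * s ^ m * F s) (fun s => INR (S m) * (s ^ m * F s)))
      by (intros; ring).
    rewrite RInt_scal_R by solve_ex_RInt.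
    rewrite Rmult_0_l, Rminus_0_r; reflexivity.
  - intros s _; apply is_derive_Reals, (derivable_pt_lim_pow s (S m)).
  - intros s _; apply is_derive_RInt_0, Cf.
  - intros s _; apply Cdpow.
  - intros s _; apply Cf.
  - apply RInt_correct; solve_ex_RInt.
Qed.

Lemma is_lim_RInt_pow_mult (f : R -> R) (Q : R) m :
  continuous_everywhere f -> is_lim (fun t => RInt f 0 t / t) p_infty Q ->
  is_lim (fun t => RInt (fun s => s ^ m * f s) 0 t / t ^ S m) p_infty (Q / INR (S m)).
Proof.
  intros Cf HQ; destruct m as [|m].
  - replace (Q / INR 1) with Q by (simpl; field).
    eapply is_lim_ext_pos; [|exact HQ]; intros t Ht.
    rewrite (RInt_ext_R (fun s => s ^ 0 * f s) f) by (intros; ring).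
    simpl; field; lra.
  - assert (Hinner : is_lim (fun t => RInt (fun s => s ^ m * RInt f 0 s) 0 t / t ^ S (S m))
                       p_infty (Q / INR (S (S m)))).
    { apply is_lim_RInt_div_pow; [solve_continuous_everywhere|].
      eapply is_lim_ext_pos; [|exact HQ]; intros t Ht.
      assert (t ^ m <> 0) by (apply pow_nonzero; lra).
      simpl; field; lra. }
    assert (Hscaled := is_lim_scal_l _ (INR (S m)) _ _ Hinner); simpl in Hscaled.
    replace (Q / INR (S (S m))) with (Q - INR (S m) * (Q / INR (S (S m)))).
    2: { rewrite (S_INR (S m)); pose proof (pos_INR (S m)); field; lra. }
    eapply is_lim_ext_pos; [|exact (is_lim_minus' _ _ _ _ _ HQ Hscaled)].
    intros t Ht; cbv beta.
    rewrite RInt_pow_succ_mult by exact Cf.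
    assert (t ^ m <> 0) by (apply pow_nonzero; lra).
    simpl; field; lra.
Qed.

Lemma is_lim_RInt_mult_of_is_lim (g f : R -> R) n (c q : R) :
  continuous_everywhere g -> continuous_everywhere f ->
  is_lim (fun t => g t / t ^ n) p_infty c ->
  is_lim (fun t => RInt f 0 t / t) p_infty q -> bounded_abs_mean f ->
  is_lim (fun t => RInt (fun s => g s * f s) 0 t / t ^ S n) p_infty (c * q / INR (S n)).
Proof.
  intros Cg Cf Hg Hq Hf.
  assert (Hmain := is_lim_scal_l _ c _ _ (is_lim_RInt_pow_mult f q n Cf Hq)); simpl in Hmain.
  assert (Herr := is_lim_div_pow_of_is_o_pow _ _
    (is_o_pow_RInt_mult (fun s => g s - c * s ^ n) f n
       ltac:(solve_continuous_everywhere) Cf (is_o_pow_of_is_lim g n c Hg) Hf)).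
  replace (c * q / INR (S n)) with (c * (q / INR (S n)) + 0).
  2: { pose proof (pos_INR n); rewrite S_INR; field; lra. }
  eapply is_lim_ext_pos; [|exact (is_lim_plus' _ _ _ _ _ Hmain Herr)].
  intros t Ht; cbv beta.
  rewrite (RInt_ext_R (fun s => g s * f s)
             (fun s => c * (s ^ n * f s) + (g s - c * s ^ n) * f s)) by (intros; ring).
  rewrite RInt_plus_R, RInt_scal_R by solve_ex_RInt.
  assert (t ^ S n <> 0) by (apply pow_nonzero; lra).
  change (t * t ^ n) with (t ^ S n); field; assumption.
Qed.

Lemma continuous_everywhere_sigma_rev (xi : nat -> R -> R) v :
  (forall i, In i v -> continuous_everywhere (xi i)) ->
  continuous_everywhere (sigma_rev xi v).
Proof.
  induction v as [|i v IH]; intros Cxi; simpl.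
  - apply continuous_everywhere_const.
  - apply continuous_everywhere_RInt, continuous_everywhere_mult.
    + apply IH; intros j Hj; apply Cxi; right; exact Hj.
    + apply Cxi; left; reflexivity.
Qed.

Lemma is_lim_sigma_rev (xi : nat -> R -> R) (Q : nat -> R) v :
  (forall i, In i v -> continuous_everywhere (xi i)) ->
  (forall i, In i v -> bounded_abs_mean (xi i)) ->
  (forall i, In i v -> is_lim (fun t => RInt (xi i) 0 t / t) p_infty (Q i)) ->
  is_lim (fun t => sigma_rev xi v t / t ^ length v) p_infty
    (fold_right Rmult 1 (map Q v) / INR (Factorial.fact (length v))).
Proof.
  induction v as [|i v IH]; intros Cxi Bxi Lxi.
  - replace (fold_right Rmult 1 (map Q nil) / INR (Factorial.fact 0)) with 1 by (simpl; field).
    eapply is_lim_ext_pos; [|apply is_lim_const]; intros t _; simpl; field.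
  - assert (Hv : forall P : nat -> Prop, (forall j, In j (i :: v) -> P j) -> forall j, In j v -> P j)
      by (intros P HP j Hj; apply HP; right; exact Hj).
    assert (Hstep := is_lim_RInt_mult_of_is_lim (sigma_rev xi v) (xi i) (length v)
      (fold_right Rmult 1 (map Q v) / INR (Factorial.fact (length v))) (Q i)
      (continuous_everywhere_sigma_rev xi v (Hv _ Cxi)) (Cxi i (or_introl eq_refl))
      (IH (Hv _ Cxi) (Hv _ Bxi) (Hv _ Lxi)) (Lxi i (or_introl eq_refl)) (Bxi i (or_introl eq_refl))).
    replace (fold_right Rmult 1 (map Q (i :: v)) / INR (Factorial.fact (length (i :: v))))
      with (fold_right Rmult 1 (map Q v) / INR (Factorial.fact (length v)) * Q i
            / INR (S (length v))).
    + exact Hstep.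
    + change (Factorial.fact (length (i :: v))) with (S (length v) * Factorial.fact (length v))%nat.
      rewrite mult_INR; simpl (fold_right _ _ _).
      pose proof (INR_fact_neq_0 (length v)); pose proof (pos_INR (length v)).
      rewrite S_INR; field; split; lra.
Qed.

Lemma RInt_ext_nonneg (f g : R -> R) t :
  (forall s, 0 <= s -> f s = g s) -> 0 <= t -> RInt f 0 t = RInt g 0 t.
Proof.
  intros Efg Ht; apply RInt_ext_R; intros s Hs.
  rewrite Rmin_left in Hs by exact Ht; apply Efg; lra.
Qed.

Lemma sigma_rev_ext_nonneg (xi xi' : nat -> R -> R) v t :
  (forall i s, 0 <= s -> xi i s = xi' i s) -> 0 <= t ->
  sigma_rev xi v t = sigma_rev xi' v t.
Proof.
  intros Exi; revert t; induction v as [|i v IH]; intros t Ht; simpl; [reflexivity|].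
  apply RInt_ext_nonneg; [|exact Ht].
  intros s Hs; rewrite IH, Exi by exact Hs; reflexivity.
Qed.

(* Continuity on [0, +oo) only gives integrability once the path is extended to all of
   [R]; extending by [xi(max 0 s)] changes no integral over [0, t]. *)
Definition extend_from_0 (xi : nat -> R -> R) : nat -> R -> R :=
  fun i s => xi i (Rmax 0 s).

Lemma extend_from_0_nonneg (xi : nat -> R -> R) i s :
  0 <= s -> extend_from_0 xi i s = xi i s.
Proof. intros Hs; unfold extend_from_0; rewrite Rmax_right by exact Hs; reflexivity. Qed.

Lemma continuous_everywhere_Rmax_0 : continuous_everywhere (Rmax 0).
Proof.
  assert (Chalf : continuous_everywhere (fun s => (s + Rabs s) * / 2))
    by solve_continuous_everywhere.
  intros x; apply (continuous_ext (fun s => (s + Rabs s) * / 2) _ x); [|apply Chalf].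
  intros s; unfold Rmax, Rabs; destruct (Rle_dec 0 s), (Rcase_abs s); lra.
Qed.

Lemma continuous_everywhere_extend_from_0 d (xi : nat -> R -> R) :
  cont_path d xi -> forall i, (i < d)%nat -> continuous_everywhere (extend_from_0 xi i).
Proof.
  intros Cxi i Hi x; unfold extend_from_0.
  apply (filterlim_comp _ _ _ (Rmax 0) (xi i) _ (within (fun s => 0 <= s) (locally (Rmax 0 x)))).
  - intros P HP.
    assert (Hnear := continuous_everywhere_Rmax_0 x _ HP); unfold filtermap in *.
    eapply filter_imp; [|exact Hnear]; intros s Hs; apply Hs, Rmax_l.
  - apply Cxi; [exact Hi | apply Rmax_l].
Qed.

Lemma sum_sq_nonneg (a : nat -> R) l : 0 <= fold_right (fun i acc => a i ^ 2 + acc) 0 l.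
Proof.
  induction l as [|i l IH]; cbn [fold_right]; [lra|].
  pose proof (pow2_ge_0 (a i)); lra.
Qed.

Lemma sum_sq_ge (a : nat -> R) l i :
  In i l -> a i ^ 2 <= fold_right (fun i acc => a i ^ 2 + acc) 0 l.
Proof.
  induction l as [|j l IH]; cbn [fold_right]; [contradiction|]; intros [<- | Hi].
  - pose proof (sum_sq_nonneg a l); lra.
  - pose proof (IH Hi); pose proof (pow2_ge_0 (a j)); lra.
Qed.

Lemma continuous_everywhere_sum_sq (xi : nat -> R -> R) l :
  (forall i, In i l -> continuous_everywhere (xi i)) ->
  continuous_everywhere (fun s => fold_right (fun i acc => xi i s ^ 2 + acc) 0 l).
Proof.
  induction l as [|i l IH]; intros Cxi; cbn [fold_right].
  - apply continuous_everywhere_const.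
  - apply continuous_everywhere_plus.
    + apply continuous_everywhere_pow, Cxi; left; reflexivity.
    + apply IH; intros j Hj; apply Cxi; right; exact Hj.
Qed.

Lemma continuous_everywhere_path_norm d (xi : nat -> R -> R) :
  (forall i, (i < d)%nat -> continuous_everywhere (xi i)) ->
  continuous_everywhere (path_norm d xi).
Proof.
  intros Cxi x; apply continuous_sqrt_comp, continuous_everywhere_sum_sq.
  intros i Hi; apply in_seq in Hi; apply Cxi; lia.
Qed.

Lemma Rabs_le_path_norm d (xi : nat -> R -> R) i s :
  (i < d)%nat -> Rabs (xi i s) <= path_norm d xi s.
Proof.
  intros Hi; unfold path_norm; rewrite <- sqrt_Rsqr_abs; apply sqrt_le_1_alt.
  rewrite Rsqr_pow2; apply (sum_sq_ge (fun j => xi j s)), in_seq; lia.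
Qed.

Lemma path_norm_ext d (xi xi' : nat -> R -> R) s :
  (forall i, xi i s = xi' i s) -> path_norm d xi s = path_norm d xi' s.
Proof.
  intros Exi; unfold path_norm; f_equal.
  induction (seq 0 d) as [|i l IH]; cbn [fold_right]; [reflexivity|]; rewrite IH, Exi; reflexivity.
Qed.

Lemma bounded_abs_mean_of_path_norm d (xi : nat -> R -> R) i :
  (forall j, (j < d)%nat -> continuous_everywhere (xi j)) -> (i < d)%nat ->
  (exists Rb T, forall t, T <= t -> 0 < t -> RInt (path_norm d xi) 0 t / t <= Rb) ->
  bounded_abs_mean (xi i).
Proof.
  intros Cxi Hi [Rb [T HT]]; exists Rb, (Rmax T 1); intros t Ht.
  pose proof (Rmax_l T 1); pose proof (Rmax_r T 1).
  apply Rle_trans with (RInt (path_norm d xi) 0 t).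
  - apply RInt_le; [lra | | |].
    + apply continuous_everywhere_ex_RInt, continuous_everywhere_abs, Cxi, Hi.
    + apply continuous_everywhere_ex_RInt, continuous_everywhere_path_norm, Cxi.
    + intros s _; apply Rabs_le_path_norm, Hi.
  - assert (Hmean := HT t ltac:(lra) ltac:(lra)).
    apply Rle_div_l in Hmean; lra.
Qed.

Lemma fold_right_Rmult_init (l : list R) x : fold_right Rmult x l = x * fold_right Rmult 1 l.
Proof. induction l as [|a l IH]; cbn [fold_right]; [ring | rewrite IH; ring]. Qed.

Lemma fold_right_Rmult_rev (l : list R) : fold_right Rmult 1 (rev l) = fold_right Rmult 1 l.
Proof.
  induction l as [|a l IH]; cbn [rev fold_right]; [reflexivity|].
  rewrite fold_right_app, fold_right_Rmult_init, IH; cbn [fold_right]; ring.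
Qed.

Theorem theorem2p4 (d : nat) (xi : nat -> R -> R) (Q : nat -> R) :
  cont_path d xi ->
  (* limsup_{t->oo} t^{-1} int_0^t |xi(s)| ds < oo *)
  (exists (Rb T : R), forall t, T <= t -> 0 < t ->
      RInt (path_norm d xi) 0 t / t <= Rb) ->
  (* lim_{t->oo} t^{-1} int_0^t xi(s) ds = Q, componentwise *)
  (forall i, (i < d)%nat ->
      is_lim (fun t => RInt (xi i) 0 t / t) p_infty (Q i)) ->
  forall w : list nat, w <> nil -> List.Forall (fun i => (i < d)%nat) w ->
    is_lim (fun t => Sigma xi w t / t ^ (List.length w)) p_infty
      (fold_right Rmult 1 (map Q w) / INR (Factorial.fact (List.length w))).
Proof.
  intros Cxi [Rb [T Hmean]] HQ w _ Hw.
  set (f := extend_from_0 xi).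
  assert (Ef : forall i s, 0 <= s -> f i s = xi i s) by exact (extend_from_0_nonneg xi).
  assert (Cf : forall i, (i < d)%nat -> continuous_everywhere (f i))
    by exact (continuous_everywhere_extend_from_0 d xi Cxi).
  assert (Bf : forall i, (i < d)%nat -> bounded_abs_mean (f i)).
  { intros i Hi; apply (bounded_abs_mean_of_path_norm d f i Cf Hi).
    exists Rb, T; intros t HTt Ht.
    rewrite (RInt_ext_nonneg _ (path_norm d xi)); [exact (Hmean t HTt Ht) | | lra].
    intros s Hs; apply path_norm_ext; intros i'; apply Ef, Hs. }
  assert (Lf : forall i, (i < d)%nat -> is_lim (fun t => RInt (f i) 0 t / t) p_infty (Q i)).
  { intros i Hi; eapply is_lim_ext_pos; [|exact (HQ i Hi)]; intros t Ht.
    rewrite (RInt_ext_nonneg (f i) (xi i)); [reflexivity | apply Ef | lra]. }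
  assert (Hrev : forall i, In i (rev w) -> (i < d)%nat)
    by (intros i Hi; apply in_rev in Hi; rewrite Forall_forall in Hw; auto).
  assert (Hlim := is_lim_sigma_rev f Q (rev w) (fun i Hi => Cf i (Hrev i Hi))
                    (fun i Hi => Bf i (Hrev i Hi)) (fun i Hi => Lf i (Hrev i Hi))).
  rewrite length_rev, map_rev, fold_right_Rmult_rev in Hlim.
  eapply is_lim_ext_pos; [|exact Hlim]; intros t Ht; unfold Sigma.
  rewrite (sigma_rev_ext_nonneg f xi); [reflexivity | exact Ef | lra].
Qed.
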